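(* Let $f:\mathcal{X}\to\mathbb{R}$, $\tau\in\mathbb{R}$, and let $\mathbf{x}=[x_1,\dots,x_p]$ be an input with $f(\mathbf{x})\ge\tau$ and $f(\mathbf{x}_{\varnothing})<\tau$. Let $S_1,\dots,S_K$ be the output of $\mathrm{SIScollection}(f,\mathbf{x},\tau)$. Then: (i) for every $k\in\{1,\dots,K\}$ and every $i\in S_k$, $f(\mathbf{x}_{S_k\setminus\{i\}})<\tau$; (ii) for every $k$, let $T_k\subseteq[p]$ be the set passed to $\mathrm{BackSelect}$ in the call that produced $S_k$, and let $T_k=U^{(k)}_{m}\supsetneq U^{(k)}_{m-1}\supsetneq\cdots\supsetneq U^{(k)}_0=\varnothing$ ($m=|T_k|$) be the successive values taken by the variable $S$ during that run of $\mathrm{BackSelect}$. Then $S_k$ is one of the sets $U^{(k)}_j$, it satisfies $f(\mathbf{x}_{S_k})\ge\tau$, and every $U^{(k)}_j$ with $f(\mathbf{x}_{U^{(k)}_j})\ge\tau$ satisfies $|U^{(k)}_j|\ge|S_k|$.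
   Context: Each input $\mathbf{x}\in\mathcal{X}$ has indexable features $\mathbf{x}=[x_1,\dots,x_p]$ with $x_i\in\mathbb{R}^{d_i}$. A fixed mask value $z_i$ is given for each feature $i$ (e.g. the mean of feature $i$). For $S\subseteq[p]=\{1,\dots,p\}$, $\mathbf{x}_S$ denotes the input whose $i$-th feature equals $x_i$ if $i\in S$ and $z_i$ if $i\notin S$ (so $\mathbf{x}_{[p]}=\mathbf{x}$, $\mathbf{x}_\varnothing=\mathbf{z}$). Algorithms (argmax ties are broken by any fixed rule): BackSelect$(f,\mathbf{x},S)$: let $R$ be an empty stack; while $S\neq\varnothing$: let $i^*=\arg\max_{i\in S} f(\mathbf{x}_{S\setminus\{i\}})$, set $S\leftarrow S\setminus\{i^*\}$, push $i^*$ onto $R$; return $R$. FindSIS$(f,\mathbf{x},\tau,R)$: let $S=\varnothing$; while $f(\mathbf{x}_S)<\tau$: pop $i$ from the top of $R$ and set $S\leftarrow S\cup\{i\}$; if $f(\mathbf{x}_S)\ge\tau$ return $S$, else return None. SIScollection$(f,\mathbf{x},\tau)$: let $S=[p]$; for $k=1,2,\dots$: $R=\mathrm{BackSelect}(f,\mathbf{x},S)$; $S_k=\mathrm{FindSIS}(f,\mathbf{x},\tau,R)$; $S\leftarrow S\setminus S_k$; if $f(\mathbf{x}_S)<\tau$, return $S_1,\dots,S_k$. *)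

From HB Require Import structures.
From mathcomp Require Import all_boot all_order all_algebra.
Set Implicit Arguments. Unset Strict Implicit. Unset Printing Implicit Defensive.
Import Order.TTheory GRing.Theory Num.Theory.
Local Open Scope ring_scope.

Definition input (R : Type) (p : nat) (d : 'I_p -> nat) :=
  forall i : 'I_p, 'rV[R]_(d i).

Definition xmask (R : Type) (p : nat) (d : 'I_p -> nat)
  (x z : input R d) (S : {set 'I_p}) : input R d :=
  fun i => if i \in S then x i else z i.

Section Algorithms.
Variables (R : realDomainType) (p : nat).

(* A fixed argmax rule: am S h is a maximizer of h over the nonempty set S
   (ties broken in an arbitrary but fixed way). *)
Definition argmax_rule (am : {set 'I_p} -> ('I_p -> R) -> 'I_p) : Prop :=
  forall (S : {set 'I_p}) (h : 'I_p -> R), S != set0 ->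
    am S h \in S /\ (forall j, j \in S -> h j <= h (am S h)).

Variables (am : {set 'I_p} -> ('I_p -> R) -> 'I_p)
          (g : {set 'I_p} -> R) (* g S = f (x_S) *) (tau : R).

(* BackSelect: list of removed indices, in order of removal
   (the stack R has its top at the END of this list). *)
Fixpoint bs_aux (n : nat) (S : {set 'I_p}) : seq 'I_p :=
  match n with
  | 0 => [::]
  | n'.+1 => if S == set0 then [::] else
      let i := am S (fun i => g (S :\ i)) in i :: bs_aux n' (S :\ i)
  end.
Definition backselect (S : {set 'I_p}) : seq 'I_p := bs_aux #|S| S.

(* Successive values taken by the variable S during BackSelect, starting
   with the input set and ending with set0. *)
Fixpoint bs_traj_aux (n : nat) (S : {set 'I_p}) : seq {set 'I_p} :=
  match n with
  | 0 => [:: S]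
  | n'.+1 => if S == set0 then [:: S] else
      let i := am S (fun i => g (S :\ i)) in S :: bs_traj_aux n' (S :\ i)
  end.
Definition bs_traj (S : {set 'I_p}) : seq {set 'I_p} := bs_traj_aux #|S| S.

(* FindSIS, with the stack given top-first. *)
Fixpoint findsis_aux (st : seq 'I_p) (S : {set 'I_p}) : option {set 'I_p} :=
  if g S < tau then
    match st with
    | [::] => None
    | i :: st' => findsis_aux st' (i |: S)
    end
  else Some S.
Definition findsis (st : seq 'I_p) : option {set 'I_p} := findsis_aux st set0.

(* SIScollection, recording for each k the pair (T_k, S_k), where T_k is the
   set passed to BackSelect in the call producing S_k.  The fuel p.+1
   bounds the number of iterations (each iteration removes >= 1 index). *)
Fixpoint sis_aux (n : nat) (S : {set 'I_p}) : seq ({set 'I_p} * {set 'I_p}) :=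
  match n with
  | 0 => [::]
  | n'.+1 =>
      match findsis (rev (backselect S)) with
      | None => [::]
      | Some Sk =>
          let S' := S :\: Sk in
          (S, Sk) :: (if g S' < tau then [::] else sis_aux n' S')
      end
  end.
Definition sis_trace : seq ({set 'I_p} * {set 'I_p}) := sis_aux p.+1 setT.
Definition sis_collection : seq {set 'I_p} := map snd sis_trace.

End Algorithms.

From HB Require Import structures.
From mathcomp Require Import all_boot all_order all_algebra.
Import Order.TTheory GRing.Theory Num.Theory.
Local Open Scope ring_scope.

(* Call U sufficient when tau <= g U.  A run of BackSelect on T visits the
   trajectory T = U_m, ..., U_0 = set0, each U_(j-1) being obtained from U_j
   by one greedy step (removing the index whose removal keeps g largest).
   The stack it returns, read top-first, adds these indices back in reverse
   order, so FindSIS scans the reversed trajectory U_0, U_1, ..., U_m and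
   returns its FIRST sufficient set ([findsis_scan], [rev_bs_traj],
   [findsis_backselect]). *)

Lemma last_scanl {T S : Type} (f : T -> S -> T) (x : T) (s : seq S) :
  last x (scanl f x s) = foldl f x s.
Proof. by elim: s x => //= y s IH x; exact: IH. Qed.

Lemma ohead_filterP {T : eqType} {P : pred T} {s : seq T} {X : T} :
  ohead (filter P s) = Some X -> X \in s /\ P X.
Proof.
case E: (filter P s) => [|Y t] //= [<-].
have : Y \in filter P s by rewrite E mem_head.
by rewrite mem_filter => /andP[].
Qed.

Lemma ohead_filter_min {T : eqType} {e : rel T} {P : pred T} {s : seq T}
    {X : T} :
  reflexive e -> transitive e -> sorted e s ->
  ohead (filter P s) = Some X -> forall U, U \in s -> P U -> e X U.
Proof.
move=> e_refl e_trans s_sorted; case E: (filter P s) => [|Y t] //= [<-] U Us PU.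
have /(sorted_filter e_trans P) : sorted e s := s_sorted.
rewrite E /= => /(order_path_min e_trans) /allP Yt.
have : U \in Y :: t by rewrite -E mem_filter PU.
by rewrite inE => /orP[/eqP-> | /Yt].
Qed.

Lemma ohead_filter_pred {T : eqType} {e : rel T} {P : pred T} {x : T}
    {s : seq T} {X : T} :
  sorted e (x :: s) -> ~~ P x -> ohead (filter P (x :: s)) = Some X ->
  exists2 Y, ~~ P Y & e Y X.
Proof.
elim: s x => [|y s IH] x /=; first by move=> _ /negbTE ->.
move=> /andP[exy ys] /negbTE Px; rewrite Px /=.
case Py: (P y) => /=; last by move=> hX; apply: (IH y); rewrite //= Py.
by move=> [<-]; exists x; rewrite ?Px.
Qed.

Section BackSelectFindSIS.
Context {R : realDomainType} {p : nat}.
Context {am : {set 'I_p} -> ('I_p -> R) -> 'I_p}.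
Context {g : {set 'I_p} -> R} {tau : R}.

Definition bs_step (U : {set 'I_p}) : {set 'I_p} :=
  U :\ am U (fun i => g (U :\ i)).

Lemma findsis_scan (st : seq 'I_p) (A : {set 'I_p}) :
  findsis_aux g tau st A =
  ohead [seq U <- A :: scanl (fun U i => i |: U) A st | tau <= g U].
Proof.
elim: st A => [|i st IH] A /=; rewrite leNgt.
  by case: (g A < tau).
by case: (g A < tau); rewrite //= -IH.
Qed.

Lemma bs_traj_auxE (n : nat) (S : {set 'I_p}) :
  bs_traj_aux am g n S = S :: behead (bs_traj_aux am g n S).
Proof. by case: n => //= n; case: ifP. Qed.

Lemma bs_traj_sorted (n : nat) (S : {set 'I_p}) :
  sorted (fun U V => V == bs_step U) (bs_traj_aux am g n S).
Proof.
elim: n S => [|n IH] S //=; case: ifP => // _.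
by move: (IH (bs_step S)); rewrite bs_traj_auxE /= eqxx.
Qed.

Hypothesis ham : argmax_rule am.

Lemma rev_bs_traj (n : nat) (S : {set 'I_p}) : (#|S| <= n)%N ->
  rev (bs_traj_aux am g n S) =
  set0 :: scanl (fun U i => i |: U) set0 (rev (bs_aux am g n S)).
Proof.
elim: n S => [|n IH] S /=.
  by rewrite leqn0 cards_eq0 => /eqP ->.
case: ifP => [/eqP -> // | /negbT S_neq0 cardS].
have [iS _] := ham S (fun i => g (S :\ i)) S_neq0.
have card_step : (#|bs_step S| <= n)%N.
  by move: cardS; rewrite (cardsD1 (am S (fun i => g (S :\ i))) S) iS.
have IHS := IH _ card_step.
rewrite !rev_cons IHS scanl_rcons foldl_rcons -last_scanl.
have -> : last set0 (scanl (fun U i => i |: U) set0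
                             (rev (bs_aux am g n (bs_step S)))) = bs_step S.
  rewrite -[LHS]/(last set0 (set0 :: _)) -IHS.
  by rewrite bs_traj_auxE rev_cons last_rcons.
by rewrite setD1K.
Qed.

Lemma findsis_backselect (T : {set 'I_p}) :
  findsis g tau (rev (backselect am g T)) =
  ohead [seq U <- rev (bs_traj am g T) | tau <= g U].
Proof. by rewrite /findsis findsis_scan /bs_traj rev_bs_traj. Qed.

Lemma findsis_backselect_spec {T X : {set 'I_p}} : g set0 < tau ->
  findsis g tau (rev (backselect am g T)) = Some X ->
  [/\ X \in bs_traj am g T, tau <= g X,
      (forall U, U \in bs_traj am g T -> tau <= g U -> X \subset U) &
      (forall i, i \in X -> g (X :\ i) < tau)].
Proof.
move=> set0_lt; rewrite findsis_backselect => first_X.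
have [X_traj tau_gX] := ohead_filterP first_X; rewrite mem_rev in X_traj.
have rev_sorted_step :
    sorted (fun Y U : {set 'I_p} => Y == bs_step U) (rev (bs_traj am g T)).
  by rewrite rev_sorted; exact: bs_traj_sorted.
split=> //.
- have rev_sorted_sub :
      sorted (fun U V : {set 'I_p} => U \subset V) (rev (bs_traj am g T)).
    apply: sub_sorted rev_sorted_step => Y U /eqP ->; exact: subD1set.
  move=> U; rewrite -mem_rev.
  apply: (ohead_filter_min _ _ rev_sorted_sub first_X) => [A | B A C].
    exact: subxx.
  exact: subset_trans.
- move: rev_sorted_step first_X.
  rewrite /bs_traj rev_bs_traj // => sorted_step first_X.
  have set0_insuff : ~~ (tau <= g set0) by rewrite -ltNge.
  have [Y Y_insuff /eqP Y_step] :=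
    ohead_filter_pred sorted_step set0_insuff first_X.
  move=> i iX; rewrite -ltNge Y_step in Y_insuff; apply: le_lt_trans Y_insuff.
  have X_neq0 : X != set0.
    by apply: contraTneq tau_gX => ->; rewrite -ltNge.
  by have [_ ->] := ham X (fun i => g (X :\ i)) X_neq0.
Qed.

End BackSelectFindSIS.

Lemma sis_trace_findsis {R : realDomainType} {p : nat}
    {am : {set 'I_p} -> ('I_p -> R) -> 'I_p} {g : {set 'I_p} -> R} {tau : R}
    {n : nat} {S : {set 'I_p}} {k : nat} :
  let tr := sis_aux am g tau n S in (k < size tr)%N ->
  findsis g tau (rev (backselect am g (nth (set0, set0) tr k).1))
  = Some (nth (set0, set0) tr k).2.
Proof.
elim: n S k => [|n IH] S k //=.
case E: (findsis _ _ _) => [X|] //=.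
case: k => [|k] //= hk.
by move: hk; case: ifP => //= _; exact: IH.
Qed.

Theorem proposition1 (R : realFieldType) (p : nat) (d : 'I_p -> nat)
  (f : input R d -> R) (z x : input R d) (tau : R)
  (am : {set 'I_p} -> ('I_p -> R) -> 'I_p) (ham : argmax_rule am) :
  tau <= f x -> f (xmask x z set0) < tau ->
  let g := fun S : {set 'I_p} => f (xmask x z S) in
  let tr := sis_trace am g tau in
  forall k : nat, (k < size tr)%N ->
  let T := (nth (set0, set0) tr k).1 in
  let Sk := (nth (set0, set0) tr k).2 in
  (* (i) *)
  (forall i, i \in Sk -> g (Sk :\ i) < tau) /\
  (* (ii) *)
  (Sk \in bs_traj am g T /\ tau <= g Sk /\
   forall U, U \in bs_traj am g T -> tau <= g U -> (#|Sk| <= #|U|)%N).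
Proof.
move=> _ set0_lt g tr k k_lt T Sk.
have [Sk_traj tau_gSk Sk_min Sk_irred] :=
  findsis_backselect_spec ham set0_lt (sis_trace_findsis k_lt).
split=> //; split=> //; split=> // U U_traj tau_gU.
exact/subset_leq_card/Sk_min.
Qed.
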